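(* Let $n\in\mathbb{N}$ be such that \[W_n=\{\langle m,\ulcorner\phi\urcorner\rangle : \phi\text{ is an }\mathscr{L}\text{-formula with }FV(\phi)\subseteq\{x\}\text{ and }\Sigma(n)\models\phi(x|\overline{m})\}.\] Then $\mathcal{M}_{\Sigma(n)}\models\Sigma(n)$.
   Context: $\mathscr{L}$ is the language of Peano arithmetic (variables, constant $0$, unary $S$, binary $+$, $\cdot$) extended by a unary modal operator $K$: whenever $\phi$ is a formula, $K\phi$ is a formula (called purely modal). An $\mathscr{L}$-structure consists of a first-order structure for the arithmetic part together with a truth value for each purely modal formula $K\phi$ and each assignment $s$ of the variables, subject to: (a) independence from $s(x)$ for $x$ not free in $\phi$; (b) invariance under alphabetic variants of $\phi$; (c) $\mathcal{M}\models K\phi(x|y)[s]$ iff $\mathcal{M}\models K\phi[s(x|s(y))]$ when $y$ is substitutable for $x$ in $\phi$. Satisfaction is extended inductively to all formulas; $\mathcal{M}\models\Sigma$ means $\mathcal{M}$ satisfies every member of $\Sigma$ under every assignment. $\Sigma\models\phi$ means every $\mathscr{L}$-structure satisfying $\Sigma$ satisfies $\phi$ under all assignments; $\phi$ is valid if $\emptyset\models\phi$. $W_e$ denotes the $e$-th recursively enumerable set; $\ulcorner\phi\urcorner$ is the canonical Gödel number of $\phi$; $\overline{k}$ is the numeral for $k$; $\langle\cdot,\cdot\rangle$ is a canonical computable bijection $\mathbb{N}^2\to\mathbb{N}$; inside $\mathscr{L}$, $\langle t_1,t_2\rangle\in W_{t_3}$ abbreviates a fixed Peano-arithmetic formula defining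 this relation. For a formula $\phi$ and an assignment $s$ into $\mathbb{N}$, $\phi^s$ is obtained by replacing each free variable $x$ of $\phi$ by $\overline{s(x)}$. For a set $\Sigma$ of sentences, $\mathcal{M}_\Sigma$ is the $\mathscr{L}$-structure with universe $\mathbb{N}$, arithmetic symbols interpreted as usual, and $\mathcal{M}_\Sigma\models K\phi[s]$ iff $\Sigma\models\phi^s$. Schemata: $E1$: universal closure of $K\phi$ for $\phi$ valid; $E2$: universal closure of $K(\phi\rightarrow\psi)\rightarrow K\phi\rightarrow K\psi$; $E4$: universal closure of $K\phi\rightarrow KK\phi$. Axioms of Peano arithmetic for $\mathscr{L}$: the usual axioms for successor, addition and multiplication together with induction for all $\mathscr{L}$-formulas. Assigned validity: the sentences $\phi^s$ for $\phi$ valid and $s$ any assignment into $\mathbb{N}$. For $n\in\mathbb{N}$, $\Sigma(n)$ is the set of sentences consisting of: (1) all instances of $E1$, $E2$, $E4$; (2) the axioms of Peano arithmetic for $\mathscr{L}$; (3) $\forall x(K\phi\leftrightarrow\langle x,\overline{\ulcorner\phi\urcorner}\rangle\in W_{\overline{n}})$ for every $\mathscr{L}$-formula $\phi$ with $FV(\phi)\subseteq\{x\}$; (4) all instances of assigned validity; (5) $K\phi$ whenever $\phi$ is in (1)–(4) or (recursively) in (5). *)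

From Stdlib Require Import List Arith PeanoNat.
Import ListNotations.

Definition var := nat.

Inductive term : Type :=
| tvar : var -> term
| tzero : term
| tsucc : term -> term
| tplus : term -> term -> term
| tmult : term -> term -> term.

Inductive form : Type :=
| feq : term -> term -> form
| fneg : form -> form
| fimp : form -> form -> form
| fall : var -> form -> form
| fK : form -> form.

Definition fand (p q : form) : form := fneg (fimp p (fneg q)).
Definition fiff (p q : form) : form := fand (fimp p q) (fimp q p).
Definition fex (v : var) (p : form) : form := fneg (fall v (fneg p)).

Fixpoint num (k : nat) : term :=
  match k with 0 => tzero | S k => tsucc (num k) end.

Fixpoint tvars (t : term) : list var :=
  match t with
  | tvar v => [v]
  | tzero => []
  | tsucc t => tvars t
  | tplus t u | tmult t u => tvars t ++ tvars u
  end.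

Fixpoint fv (p : form) : list var :=
  match p with
  | feq t u => tvars t ++ tvars u
  | fneg p => fv p
  | fimp p q => fv p ++ fv q
  | fall v p => remove Nat.eq_dec v (fv p)
  | fK p => fv p
  end.

Fixpoint bv (p : form) : list var :=
  match p with
  | feq _ _ => []
  | fneg p => bv p
  | fimp p q => bv p ++ bv q
  | fall v p => v :: bv p
  | fK p => bv p
  end.

Definition sentence (p : form) : Prop := fv p = [].

Definition closure (p : form) : form :=
  fold_right fall p (nodup Nat.eq_dec (fv p)).

(* naive substitution of the term t for the free occurrences of v *)
Fixpoint tsubst (v : var) (s : term) (t : term) : term :=
  match t with
  | tvar w => if Nat.eqb w v then s else tvar w
  | tzero => tzero
  | tsucc t => tsucc (tsubst v s t)
  | tplus t u => tplus (tsubst v s t) (tsubst v s u)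
  | tmult t u => tmult (tsubst v s t) (tsubst v s u)
  end.

Fixpoint fsubst (v : var) (s : term) (p : form) : form :=
  match p with
  | feq t u => feq (tsubst v s t) (tsubst v s u)
  | fneg p => fneg (fsubst v s p)
  | fimp p q => fimp (fsubst v s p) (fsubst v s q)
  | fall w p => if Nat.eqb w v then fall w p else fall w (fsubst v s p)
  | fK p => fK (fsubst v s p)
  end.

(* the term s is substitutable for v in p (Enderton); K is not a binder *)
Fixpoint substitutable (v : var) (s : term) (p : form) : Prop :=
  match p with
  | feq _ _ => True
  | fneg p => substitutable v s p
  | fimp p q => substitutable v s p /\ substitutable v s q
  | fall w p => ~ In v (fv (fall w p)) \/
                (~ In w (tvars s) /\ substitutable v s p)
  | fK p => substitutable v s p
  end.

(* p^s : replace every free variable v by the numeral of s v *)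
Fixpoint tassign (s : var -> nat) (bnd : list var) (t : term) : term :=
  match t with
  | tvar v => if existsb (Nat.eqb v) bnd then tvar v else num (s v)
  | tzero => tzero
  | tsucc t => tsucc (tassign s bnd t)
  | tplus t u => tplus (tassign s bnd t) (tassign s bnd u)
  | tmult t u => tmult (tassign s bnd t) (tassign s bnd u)
  end.

Fixpoint fassign_aux (s : var -> nat) (bnd : list var) (p : form) : form :=
  match p with
  | feq t u => feq (tassign s bnd t) (tassign s bnd u)
  | fneg p => fneg (fassign_aux s bnd p)
  | fimp p q => fimp (fassign_aux s bnd p) (fassign_aux s bnd q)
  | fall w p => fall w (fassign_aux s (w :: bnd) p)
  | fK p => fK (fassign_aux s bnd p)
  end.

Definition fassign (s : var -> nat) (p : form) : form := fassign_aux s [] p.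

Inductive dterm : Type :=
| DB : nat -> dterm | DF : var -> dterm | DZ : dterm
| DS : dterm -> dterm | DP : dterm -> dterm -> dterm | DM : dterm -> dterm -> dterm.

Inductive dform : Type :=
| DEq : dterm -> dterm -> dform | DNeg : dform -> dform
| DImp : dform -> dform -> dform | DAll : dform -> dform | DK : dform -> dform.

Fixpoint index_of (v : var) (env : list var) : option nat :=
  match env with
  | [] => None
  | w :: env => if Nat.eqb v w then Some 0
                else option_map S (index_of v env)
  end.

Fixpoint dbt (env : list var) (t : term) : dterm :=
  match t with
  | tvar v => match index_of v env with Some i => DB i | None => DF v end
  | tzero => DZ
  | tsucc t => DS (dbt env t)
  | tplus t u => DP (dbt env t) (dbt env u)
  | tmult t u => DM (dbt env t) (dbt env u)
  end.

Fixpoint dbf (env : list var) (p : form) : dform :=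
  match p with
  | feq t u => DEq (dbt env t) (dbt env u)
  | fneg p => DNeg (dbf env p)
  | fimp p q => DImp (dbf env p) (dbf env q)
  | fall v p => DAll (dbf (v :: env) p)
  | fK p => DK (dbf env p)
  end.

Definition alpha_variant (p q : form) : Prop := dbf [] p = dbf [] q.

Record prestructure : Type := {
  dom : Type;
  i0 : dom;
  iS : dom -> dom;
  iplus : dom -> dom -> dom;
  imult : dom -> dom -> dom;
  (* truth value of the purely modal formula K p under an assignment *)
  iK : form -> (var -> dom) -> Prop }.

Definition update {D : Type} (s : var -> D) (v : var) (d : D) : var -> D :=
  fun w => if Nat.eqb w v then d else s w.

Fixpoint teval (M : prestructure) (s : var -> dom M) (t : term) : dom M :=
  match t with
  | tvar v => s v
  | tzero => i0 M
  | tsucc t => iS M (teval M s t)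
  | tplus t u => iplus M (teval M s t) (teval M s u)
  | tmult t u => imult M (teval M s t) (teval M s u)
  end.

Fixpoint sat (M : prestructure) (s : var -> dom M) (p : form) : Prop :=
  match p with
  | feq t u => teval M s t = teval M s u
  | fneg p => ~ sat M s p
  | fimp p q => sat M s p -> sat M s q
  | fall v p => forall d : dom M, sat M (update s v d) p
  | fK p => iK M p s
  end.

(* conditions (a), (b), (c) on the interpretation of K *)
Definition is_structure (M : prestructure) : Prop :=
  (forall p (s s' : var -> dom M),
      (forall v, In v (fv p) -> s v = s' v) -> (iK M p s <-> iK M p s')) /\
  (forall p q (s : var -> dom M),
      alpha_variant p q -> (iK M p s <-> iK M q s)) /\
  (forall p x y (s : var -> dom M),
      substitutable x (tvar y) p ->
      (iK M (fsubst x (tvar y) p) s <-> iK M p (update s x (s y)))).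

Record structure : Type := { pre :> prestructure; pre_ok : is_structure pre }.

Definition models (M : prestructure) (Sig : form -> Prop) : Prop :=
  forall p, Sig p -> forall s : var -> dom M, sat M s p.

Definition conseq (Sig : form -> Prop) (p : form) : Prop :=
  forall M : structure, models M Sig -> forall s : var -> dom M, sat M s p.

Definition valid (p : form) : Prop := conseq (fun _ => False) p.

Definition pair (a b : nat) : nat := (a + b) * (a + b + 1) / 2 + b.

Fixpoint gterm (t : term) : nat :=
  match t with
  | tvar v => pair 0 v
  | tzero => pair 1 0
  | tsucc t => pair 2 (gterm t)
  | tplus t u => pair 3 (pair (gterm t) (gterm u))
  | tmult t u => pair 4 (pair (gterm t) (gterm u))
  end.

Fixpoint gform (p : form) : nat :=
  match p with
  | feq t u => pair 0 (pair (gterm t) (gterm u))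
  | fneg p => pair 1 (gform p)
  | fimp p q => pair 2 (pair (gform p) (gform q))
  | fall v p => pair 3 (pair v (gform p))
  | fK p => pair 4 (gform p)
  end.

Inductive prog : Type :=
| PZero : prog
| PSucc : prog
| PProj : nat -> prog
| PComp : prog -> list prog -> prog
| PRec : prog -> prog -> prog
| PMu : prog -> prog.

Inductive peval : prog -> list nat -> nat -> Prop :=
| ev_zero v : peval PZero v 0
| ev_succ v : peval PSucc v (S (hd 0 v))
| ev_proj i v : peval (PProj i) v (nth i v 0)
| ev_comp f gs v ys y :
    Forall2 (fun g y => peval g v y) gs ys -> peval f ys y ->
    peval (PComp f gs) v y
| ev_rec0 f g v y : peval f v y -> peval (PRec f g) (0 :: v) y
| ev_recS f g n v z y :
    peval (PRec f g) (n :: v) z -> peval g (n :: z :: v) y ->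
    peval (PRec f g) (S n :: v) y
| ev_mu f v n :
    peval f (n :: v) 0 ->
    (forall m, m < n -> exists k, peval f (m :: v) (S k)) ->
    peval (PMu f) v n.

Fixpoint enc (c : prog) : nat :=
  match c with
  | PZero => pair 0 0
  | PSucc => pair 1 0
  | PProj i => pair 2 i
  | PComp f gs =>
      pair 3 (pair (enc f)
        ((fix encl (l : list prog) : nat :=
            match l with [] => 0 | g :: l => S (pair (enc g) (encl l)) end) gs))
  | PRec f g => pair 4 (pair (enc f) (enc g))
  | PMu f => pair 5 (enc f)
  end.

Definition W (e k : nat) : Prop :=
  exists c, enc c = e /\ exists y, peval c [k] y.

Definition flt (z : var) (u t : term) : form :=
  fex z (feq (tplus u (tsucc (tvar z))) t).

Inductive Delta0 : form -> Prop :=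
| d0_eq t u : Delta0 (feq t u)
| d0_neg p : Delta0 p -> Delta0 (fneg p)
| d0_imp p q : Delta0 p -> Delta0 q -> Delta0 (fimp p q)
| d0_ball y z t p : y <> z -> ~ In y (tvars t) -> ~ In z (tvars t) ->
    Delta0 p -> Delta0 (fall y (fimp (flt z (tvar y) t) p)).

Inductive Sigma1 : form -> Prop :=
| s1_d0 p : Delta0 p -> Sigma1 p
| s1_ex y p : Sigma1 p -> Sigma1 (fex y p).

(* the standard model N (K plays no role for K-free formulas) *)
Definition stdN : prestructure :=
  {| dom := nat; i0 := 0; iS := S; iplus := Nat.add; imult := Nat.mul;
     iK := fun _ _ => False |}.

(* theta, with argument variables a b c, is a fixed Sigma_1 PA formula
   defining {(m,k,e) | <m,k> \in W_e} in N; x is not bound in theta so the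
   substitution below is capture-free. *)
Definition W_formula (x a b c : var) (theta : form) : Prop :=
  Sigma1 theta /\ a <> b /\ a <> c /\ b <> c /\
  (forall v, In v (fv theta) -> v = a \/ v = b \/ v = c) /\
  ~ In x (bv theta) /\
  (forall s : var -> nat, sat stdN s theta <-> W (s c) (pair (s a) (s b))).

(* theta(t1,t2,t3), i.e. <t1,t2> \in W_t3 (t1 = x, t2 t3 numerals) *)
Definition inW (a b c : var) (theta : form) (t1 t2 t3 : term) : form :=
  fsubst a t1 (fsubst b t2 (fsubst c t3 theta)).

Definition v0 : var := 0.
Definition v1 : var := 1.

Inductive PAax : form -> Prop :=
| pa_s0 : PAax (fall v0 (fneg (feq (tsucc (tvar v0)) tzero)))
| pa_sinj : PAax (fall v0 (fall v1
      (fimp (feq (tsucc (tvar v0)) (tsucc (tvar v1))) (feq (tvar v0) (tvar v1)))))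
| pa_p0 : PAax (fall v0 (feq (tplus (tvar v0) tzero) (tvar v0)))
| pa_pS : PAax (fall v0 (fall v1
      (feq (tplus (tvar v0) (tsucc (tvar v1))) (tsucc (tplus (tvar v0) (tvar v1))))))
| pa_m0 : PAax (fall v0 (feq (tmult (tvar v0) tzero) tzero))
| pa_mS : PAax (fall v0 (fall v1
      (feq (tmult (tvar v0) (tsucc (tvar v1)))
           (tplus (tmult (tvar v0) (tvar v1)) (tvar v0)))))
| pa_ind (v : var) (p : form) : PAax (closure
      (fimp (fand (fsubst v tzero p)
                  (fall v (fimp p (fsubst v (tsucc (tvar v)) p))))
            (fall v p))).

Inductive Sigma_n (x a b c : var) (theta : form) (n : nat) : form -> Prop :=
| sg_E1 p : valid p -> Sigma_n x a b c theta n (closure (fK p))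
| sg_E2 p q : Sigma_n x a b c theta n
    (closure (fimp (fK (fimp p q)) (fimp (fK p) (fK q))))
| sg_E4 p : Sigma_n x a b c theta n (closure (fimp (fK p) (fK (fK p))))
| sg_PA p : PAax p -> Sigma_n x a b c theta n p
| sg_3 p : (forall v, In v (fv p) -> v = x) ->
    Sigma_n x a b c theta n
      (fall x (fiff (fK p) (inW a b c theta (tvar x) (num (gform p)) (num n))))
| sg_AV p (s : var -> nat) : valid p -> Sigma_n x a b c theta n (fassign s p)
| sg_K5 p : Sigma_n x a b c theta n p -> Sigma_n x a b c theta n (fK p).

Definition M_of (Sig : form -> Prop) : prestructure :=
  {| dom := nat; i0 := 0; iS := S; iplus := Nat.add; imult := Nat.mul;
     iK := fun p s => conseq Sig (fassign s p) |}.

From Stdlib Require Import List Arith PeanoNat Lia Classical FunctionalExtensionality.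
Import ListNotations.

(* Conditions (a)-(c) hold because
   [p^s] only reads [s] on the free variables of [p], turns alphabetic variants into
   alphabetic variants (satisfaction is invariant under those in every structure, by (a)-(c)
   themselves), and commutes with renaming.  The arithmetic part of [M_Sigma] is the standard
   model, so the PA axioms hold, and the instances of (3) hold because there the right-hand
   side is evaluated in N, where by the choice of [n] it says exactly [Sigma |= phi(x|m)].  For E4 one needs
   [Sigma |= psi -> Sigma |= K psi] for sentences [psi]: then [<0, #psi>] lies in [W_n], a
   true Sigma_1 fact, which therefore holds in every model of PA, hence of [Sigma], and the
   instance of (3) for [psi] turns it into [K psi]. *)

Lemma update_eq {D} (s : var -> D) v d : update s v d v = d.
Proof. unfold update. now rewrite Nat.eqb_refl. Qed.

Lemma update_neq {D} (s : var -> D) v d w : w <> v -> update s v d w = s w.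
Proof. intros H. unfold update. apply Nat.eqb_neq in H. now rewrite H. Qed.

Lemma update_shadow {D} (s : var -> D) v d e : update (update s v d) v e = update s v e.
Proof. apply functional_extensionality; intro w. unfold update. now destruct (w =? v). Qed.

Lemma update_comm {D} (s : var -> D) v w d e : v <> w ->
  update (update s v d) w e = update (update s w e) v d.
Proof.
  intros H. apply functional_extensionality; intro u. unfold update.
  destruct (Nat.eqb_spec u w), (Nat.eqb_spec u v); congruence.
Qed.

Ltac simpl_update :=
  repeat first [rewrite update_eq | rewrite update_neq by (auto; congruence)].

Lemma pair_diag_lt k1 k2 : k1 < k2 -> k1 * (k1 + 1) / 2 + k1 < k2 * (k2 + 1) / 2.
Proof.
  assert (step : forall k, k * (k + 1) / 2 + k < S k * (S k + 1) / 2).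
  { intros k. replace (S k * (S k + 1)) with (k * (k + 1) + (k + 1) * 2) by nia.
    rewrite Nat.div_add by lia. lia. }
  induction 1; [apply step|]. specialize (step m). lia.
Qed.

Lemma pair_inj a b a' b' : pair a b = pair a' b' -> a = a' /\ b = b'.
Proof.
  unfold pair. intros H.
  destruct (Nat.lt_trichotomy (a + b) (a' + b')) as [Hl|[He|Hl]].
  - pose proof (pair_diag_lt _ _ Hl). lia.
  - rewrite He in H. lia.
  - pose proof (pair_diag_lt _ _ Hl). lia.
Qed.

Lemma gterm_inj t u : gterm t = gterm u -> t = u.
Proof.
  revert u; induction t; destruct u; simpl; intros H;
  try (apply pair_inj in H; destruct H as [H1 H2]; discriminate H1);
  apply pair_inj in H; destruct H as [_ H];
  try (apply pair_inj in H; destruct H as [H H']);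
  f_equal; auto.
Qed.

Lemma gform_inj p q : gform p = gform q -> p = q.
Proof.
  revert q; induction p; destruct q; simpl; intros H;
  try (apply pair_inj in H; destruct H as [H1 H2]; discriminate H1);
  apply pair_inj in H; destruct H as [_ H];
  try (apply pair_inj in H; destruct H as [H H']);
  f_equal; auto using gterm_inj.
Qed.

Lemma existsb_eqb_iff v l : existsb (Nat.eqb v) l = true <-> In v l.
Proof.
  rewrite existsb_exists. split.
  - intros [w [H1 H2]]. apply Nat.eqb_eq in H2. now subst.
  - intros H. exists v. split; auto. apply Nat.eqb_refl.
Qed.

Lemma existsb_eqb_false_iff v l : existsb (Nat.eqb v) l = false <-> ~ In v l.
Proof.
  rewrite <- existsb_eqb_iff. destruct (existsb (Nat.eqb v) l); intuition congruence.
Qed.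

Lemma in_remove_iff (l : list var) x y : In x (remove Nat.eq_dec y l) <-> In x l /\ x <> y.
Proof. split; [apply in_remove|intros [H1 H2]; apply in_in_remove; auto]. Qed.

Lemma notin_tvars_num k v : ~ In v (tvars (num k)).
Proof. induction k; simpl; auto. Qed.

Lemma In_tvars_tsubst v t u w :
  In w (tvars (tsubst v t u)) -> (In w (tvars u) /\ w <> v) \/ In w (tvars t).
Proof.
  induction u; simpl; intros H; try rewrite in_app_iff in *.
  - destruct (Nat.eqb_spec v0 v); simpl in *; auto.
    destruct H; [subst|contradiction]. left; auto.
  - contradiction.
  - auto.
  - destruct H as [H|H]; [apply IHu1 in H|apply IHu2 in H]; tauto.
  - destruct H as [H|H]; [apply IHu1 in H|apply IHu2 in H]; tauto.
Qed.

Lemma In_fv_fsubst v t p w :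
  In w (fv (fsubst v t p)) -> (In w (fv p) /\ w <> v) \/ In w (tvars t).
Proof.
  revert w; induction p; simpl; intros w H; try rewrite in_app_iff in *.
  - destruct H as [H|H]; apply In_tvars_tsubst in H; tauto.
  - auto.
  - destruct H as [H|H]; [apply IHp1 in H|apply IHp2 in H]; tauto.
  - destruct (Nat.eqb_spec v0 v); simpl in H; rewrite in_remove_iff in *.
    + subst. tauto.
    + destruct H as [H1 H2]. apply IHp in H1. tauto.
  - auto.
Qed.

Lemma In_fv_fsubst_var v z p u : In u (fv (fsubst v (tvar z) p)) ->
  (In u (fv p) /\ u <> v) \/ (u = z /\ In v (fv p)).
Proof.
  assert (Ht : forall t, In u (tvars (tsubst v (tvar z) t)) ->
      (In u (tvars t) /\ u <> v) \/ (u = z /\ In v (tvars t))).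
  { induction t as [w| |t IHt|t1 IHt1 t2 IHt2|t1 IHt1 t2 IHt2];
      simpl; intros G; repeat rewrite in_app_iff in *; try tauto.
    destruct (Nat.eqb_spec w v); simpl in G; destruct G as [G|[]]; subst; auto. }
  induction p; simpl; intros H; repeat rewrite in_app_iff in *.
  - destruct H as [H|H]; apply Ht in H; tauto.
  - auto.
  - destruct H as [H|H]; [apply IHp1 in H|apply IHp2 in H]; tauto.
  - destruct (Nat.eqb_spec v0 v); simpl in H; rewrite !in_remove_iff in *.
    + subst. tauto.
    + destruct H as [H1 H2]. apply IHp in H1.
      destruct H1; [left|right]; intuition congruence.
  - auto.
Qed.

Lemma tsubst_notin v t u : ~ In v (tvars u) -> tsubst v t u = u.
Proof.
  induction u; simpl; intros H; try rewrite in_app_iff in *; f_equal; auto.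
  destruct (Nat.eqb_spec v0 v); auto. subst; tauto.
Qed.

Lemma fsubst_notin v t p : ~ In v (fv p) -> fsubst v t p = p.
Proof.
  induction p; simpl; intros H; try rewrite in_app_iff in *; f_equal; auto using tsubst_notin.
  destruct (Nat.eqb_spec v0 v); auto. f_equal. apply IHp. intros Hv. apply H, in_in_remove; auto.
Qed.

Lemma bv_fsubst v t p : bv (fsubst v t p) = bv p.
Proof. induction p; simpl; try congruence. destruct (v0 =? v); simpl; congruence. Qed.

Lemma substitutable_var_notin_bv v z p : ~ In z (bv p) -> substitutable v (tvar z) p.
Proof.
  induction p; simpl; intros H; try rewrite in_app_iff in H; auto; try tauto.
  right. split; [simpl; intuition|]. auto.
Qed.

Lemma tassign_num s bnd k : tassign s bnd (num k) = num k.
Proof. induction k; simpl; congruence. Qed.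

Lemma tassign_ext s s' bnd t :
  (forall v, In v (tvars t) -> ~ In v bnd -> s v = s' v) ->
  tassign s bnd t = tassign s' bnd t.
Proof.
  induction t; simpl; intros H; try setoid_rewrite in_app_iff in H; f_equal; auto.
  destruct (existsb (Nat.eqb v) bnd) eqn:E; auto.
  rewrite (H v); auto. apply existsb_eqb_false_iff; auto.
Qed.

Lemma fassign_aux_ext s s' bnd p :
  (forall v, In v (fv p) -> ~ In v bnd -> s v = s' v) ->
  fassign_aux s bnd p = fassign_aux s' bnd p.
Proof.
  revert bnd; induction p; simpl; intros bnd H; try setoid_rewrite in_app_iff in H; f_equal;
    auto using tassign_ext.
  apply IHp. intros w H1 H2. apply H; [apply in_in_remove|]; simpl in H2; intuition.
Qed.

Lemma tassign_id s bnd t : (forall v, In v (tvars t) -> In v bnd) -> tassign s bnd t = t.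
Proof.
  induction t; simpl; intros H; try setoid_rewrite in_app_iff in H; f_equal; auto.
  destruct (existsb (Nat.eqb v) bnd) eqn:E; auto.
  apply existsb_eqb_false_iff in E. exfalso; auto.
Qed.

Lemma fassign_aux_id s bnd p : (forall v, In v (fv p) -> In v bnd) -> fassign_aux s bnd p = p.
Proof.
  revert bnd; induction p; simpl; intros bnd H; try setoid_rewrite in_app_iff in H; f_equal;
    auto using tassign_id.
  apply IHp. intros w H1. destruct (Nat.eq_dec w v); [subst; simpl; auto|].
  right. apply H. apply in_in_remove; auto.
Qed.

Lemma In_tvars_tassign s bnd t v : In v (tvars (tassign s bnd t)) -> In v bnd.
Proof.
  induction t; simpl; intros H; try rewrite in_app_iff in *.
  - destruct (existsb (Nat.eqb v0) bnd) eqn:E.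
    + simpl in H. destruct H as [->|[]]. apply existsb_eqb_iff; auto.
    + exfalso; eapply notin_tvars_num; eauto.
  - contradiction.
  - auto.
  - destruct H; auto.
  - destruct H; auto.
Qed.

Lemma In_fv_fassign_aux s bnd p v : In v (fv (fassign_aux s bnd p)) -> In v bnd.
Proof.
  revert bnd; induction p; simpl; intros bnd H; try rewrite in_app_iff in *.
  - destruct H; eapply In_tvars_tassign; eauto.
  - eauto.
  - destruct H; eauto.
  - apply in_remove in H. destruct H as [H1 H2]. apply IHp in H1. destruct H1; auto. congruence.
  - eauto.
Qed.

Lemma tassign_tsubst_var s bnd x y t : ~ In x bnd -> ~ In y bnd ->
  tassign s bnd (tsubst x (tvar y) t) = tassign (update s x (s y)) bnd t.
Proof.
  intros Hx Hy. induction t; simpl; f_equal; auto.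
  destruct (Nat.eqb_spec v x).
  - subst. simpl. apply existsb_eqb_false_iff in Hx, Hy. rewrite Hx, Hy. now rewrite update_eq.
  - simpl. destruct (existsb (Nat.eqb v) bnd); auto. now rewrite update_neq.
Qed.

Lemma fassign_aux_fsubst_var s bnd x y p :
  substitutable x (tvar y) p -> ~ In x bnd -> ~ In y bnd ->
  fassign_aux s bnd (fsubst x (tvar y) p) = fassign_aux (update s x (s y)) bnd p.
Proof.
  revert bnd; induction p; intros bnd Hs Hx Hy.
  - simpl; f_equal; auto using tassign_tsubst_var.
  - simpl in *; f_equal; auto.
  - simpl in *; f_equal; [apply IHp1|apply IHp2]; tauto.
  - destruct Hs as [Hs|[Hs1 Hs2]].
    + rewrite fsubst_notin by exact Hs. apply fassign_aux_ext.
      intros w H1 H2. destruct (Nat.eq_dec w x); [subst; contradiction|now rewrite update_neq].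
    + simpl. destruct (Nat.eqb_spec v x).
      * subst. simpl. f_equal. apply fassign_aux_ext. intros w H1 H2.
        rewrite update_neq; auto. intros ->; simpl in H2; auto.
      * simpl. f_equal. apply IHp; auto; simpl in *; intuition.
  - simpl in *; f_equal; auto.
Qed.

Lemma tassign_tsubst_num s bnd v t d u :
  (forall bnd', ~ In v bnd' -> tassign s bnd' t = num d) -> ~ In v bnd ->
  tassign s bnd (tsubst v t u) = tassign (update s v d) bnd u.
Proof.
  intros Ht Hv. induction u; simpl; f_equal; auto.
  destruct (Nat.eqb_spec v0 v).
  - subst. rewrite Ht by auto. apply existsb_eqb_false_iff in Hv. rewrite Hv.
    now rewrite update_eq.
  - simpl. destruct (existsb (Nat.eqb v0) bnd); auto. now rewrite update_neq.
Qed.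

Lemma fassign_aux_fsubst_num s bnd v t d p :
  (forall bnd', ~ In v bnd' -> tassign s bnd' t = num d) -> ~ In v bnd ->
  fassign_aux s bnd (fsubst v t p) = fassign_aux (update s v d) bnd p.
Proof.
  intros Ht. revert bnd; induction p; simpl; intros bnd Hv; f_equal;
    auto using tassign_tsubst_num.
  destruct (Nat.eqb_spec v0 v).
  - subst. simpl. f_equal. apply fassign_aux_ext. intros w H1 H2.
    rewrite update_neq; auto. intros ->; simpl in H2; auto.
  - simpl. f_equal. apply IHp. simpl; intuition.
Qed.

Lemma tassign_single_var s bnd x t : (forall v, In v (tvars t) -> v = x \/ In v bnd) ->
  tassign s bnd t = if existsb (Nat.eqb x) bnd then t else tsubst x (num (s x)) t.
Proof.
  induction t; simpl; intros H; try setoid_rewrite in_app_iff in H.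
  - destruct (existsb (Nat.eqb v) bnd) eqn:E.
    + destruct (existsb (Nat.eqb x) bnd) eqn:E2; auto. simpl.
      destruct (Nat.eqb_spec v x); auto. subst. congruence.
    + destruct (H v) as [->|Hv]; auto.
      * rewrite E, Nat.eqb_refl. auto.
      * apply existsb_eqb_iff in Hv; congruence.
  - destruct (existsb (Nat.eqb x) bnd); auto.
  - rewrite IHt by auto. destruct (existsb (Nat.eqb x) bnd); auto.
  - rewrite IHt1, IHt2 by auto. destruct (existsb (Nat.eqb x) bnd); auto.
  - rewrite IHt1, IHt2 by auto. destruct (existsb (Nat.eqb x) bnd); auto.
Qed.

Lemma fassign_aux_single_var s bnd x p : (forall v, In v (fv p) -> v = x \/ In v bnd) ->
  fassign_aux s bnd p = if existsb (Nat.eqb x) bnd then p else fsubst x (num (s x)) p.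
Proof.
  revert bnd; induction p; simpl; intros bnd H; try setoid_rewrite in_app_iff in H.
  - rewrite !(tassign_single_var s bnd x) by auto. destruct (existsb (Nat.eqb x) bnd); auto.
  - rewrite IHp by auto. destruct (existsb (Nat.eqb x) bnd); auto.
  - rewrite IHp1, IHp2 by auto. destruct (existsb (Nat.eqb x) bnd); auto.
  - rewrite IHp.
    + simpl. destruct (Nat.eqb_spec x v).
      * subst. rewrite Nat.eqb_refl. simpl. destruct (existsb (Nat.eqb v) bnd); auto.
      * destruct (existsb (Nat.eqb x) bnd) eqn:E; auto.
        apply Nat.eqb_neq in n. rewrite Nat.eqb_sym, n. auto.
    + intros w Hw. destruct (Nat.eq_dec w v); [subst; simpl; auto|].
      destruct (H w) as [|]; [apply in_in_remove; auto|auto|simpl; auto].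
  - rewrite IHp by auto. destruct (existsb (Nat.eqb x) bnd); auto.
Qed.

Lemma fassign_single_var s x p : (forall v, In v (fv p) -> v = x) ->
  fassign s p = fsubst x (num (s x)) p.
Proof. intros H. apply (fassign_aux_single_var s [] x). intros v Hv; left; auto. Qed.

Definition patch (s s0 : var -> nat) (bnd : list var) : var -> nat :=
  fun v => if existsb (Nat.eqb v) bnd then s v else s0 v.

Lemma tassign_tassign s s0 C bnd t :
  tassign s C (tassign s0 (C ++ bnd) t) = tassign (patch s s0 bnd) C t.
Proof.
  induction t; simpl; f_equal; auto.
  unfold patch. unfold var in *. rewrite existsb_app.
  destruct (existsb (Nat.eqb v) C) eqn:E1; simpl; [rewrite E1; auto|].
  destruct (existsb (Nat.eqb v) bnd); simpl; [rewrite E1; auto|now rewrite tassign_num].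
Qed.

Lemma fassign_aux_fassign_aux s s0 C bnd p :
  fassign_aux s C (fassign_aux s0 (C ++ bnd) p) = fassign_aux (patch s s0 bnd) C p.
Proof. revert C; induction p; simpl; intros C; f_equal; auto using tassign_tassign. Qed.

(** * Alphabetic variants *)

Lemma index_of_None v env : index_of v env = None <-> ~ In v env.
Proof.
  induction env as [|w env IH]; simpl; [tauto|].
  destruct (Nat.eqb_spec v w); [subst; split; [discriminate|tauto]|].
  destruct (index_of v env); simpl; split; intros H; try discriminate.
  - exfalso. assert (Some n0 = None) by (apply IH; tauto). discriminate.
  - intros [H'|H']; [congruence|]. apply IH in H'; auto.
  - auto.
Qed.

Lemma index_of_lt_length v C i : index_of v C = Some i -> i < length C.
Proof.
  revert i; induction C as [|w C IH]; simpl; intros i H; [discriminate|].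
  destruct (v =? w); [injection H; lia|].
  destruct (index_of v C) eqn:E; simpl in H; [|discriminate].
  injection H as <-. specialize (IH _ eq_refl). lia.
Qed.

Lemma index_of_app v C L : index_of v (C ++ L) =
  match index_of v C with
  | Some i => Some i
  | None => option_map (fun j => length C + j) (index_of v L)
  end.
Proof.
  induction C as [|w C IH]; simpl.
  - destruct (index_of v L); auto.
  - destruct (v =? w); auto. rewrite IH.
    destruct (index_of v C); simpl; auto. destruct (index_of v L); auto.
Qed.

Fixpoint dt_free (v : var) (t : dterm) : Prop :=
  match t with
  | DF w => w = v
  | DS t => dt_free v t
  | DP t u | DM t u => dt_free v t \/ dt_free v u
  | _ => False
  end.

Fixpoint df_free (v : var) (p : dform) : Prop :=
  match p with
  | DEq t u => dt_free v t \/ dt_free v u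
  | DNeg p | DAll p | DK p => df_free v p
  | DImp p q => df_free v p \/ df_free v q
  end.

Lemma dt_free_dbt v env t : dt_free v (dbt env t) <-> In v (tvars t) /\ ~ In v env.
Proof.
  induction t; simpl; try rewrite in_app_iff; try tauto.
  destruct (index_of v0 env) eqn:E; simpl.
  - split; [tauto|]. intros [[->|[]] H]. apply index_of_None in H. congruence.
  - apply index_of_None in E. split; [intros ->; tauto|]. intros [[->|[]] _]; auto.
Qed.

Lemma df_free_dbf v env p : df_free v (dbf env p) <-> In v (fv p) /\ ~ In v env.
Proof.
  revert env; induction p; intros env; simpl; try rewrite in_app_iff.
  - rewrite !dt_free_dbt. tauto.
  - auto.
  - rewrite IHp1, IHp2. tauto.
  - rewrite IHp, in_remove_iff. simpl. intuition.
  - auto.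
Qed.

Fixpoint dt_inst (k : nat) (z : var) (t : dterm) : dterm :=
  match t with
  | DB i => if i =? k then DF z else if k <? i then DB (pred i) else DB i
  | DF v => DF v
  | DZ => DZ
  | DS t => DS (dt_inst k z t)
  | DP t u => DP (dt_inst k z t) (dt_inst k z u)
  | DM t u => DM (dt_inst k z t) (dt_inst k z u)
  end.

Fixpoint df_inst (k : nat) (z : var) (p : dform) : dform :=
  match p with
  | DEq t u => DEq (dt_inst k z t) (dt_inst k z u)
  | DNeg p => DNeg (df_inst k z p)
  | DImp p q => DImp (df_inst k z p) (df_inst k z q)
  | DAll p => DAll (df_inst (S k) z p)
  | DK p => DK (df_inst k z p)
  end.

Lemma dbt_tvar_inst_notin z u v C env : u <> v -> ~ In u C ->
  dbt (C ++ env) (tvar u) = dt_inst (length C) z (dbt (C ++ v :: env) (tvar u)).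
Proof.
  intros Huv HuC. simpl. rewrite !index_of_app.
  assert (E : index_of u C = None) by (apply index_of_None; auto). rewrite E.
  simpl. apply Nat.eqb_neq in Huv. rewrite Huv.
  destruct (index_of u env) as [i|]; simpl; auto.
  replace (length C + S i =? length C) with false by (symmetry; apply Nat.eqb_neq; lia).
  replace (length C <? length C + S i) with true by (symmetry; apply Nat.ltb_lt; lia).
  f_equal. lia.
Qed.

Lemma dbt_tvar_inst_in z u v C env : In u C ->
  dbt (C ++ env) (tvar u) = dt_inst (length C) z (dbt (C ++ v :: env) (tvar u)).
Proof.
  intros HuC. simpl. rewrite !index_of_app.
  destruct (index_of u C) as [i|] eqn:E.
  - apply index_of_lt_length in E. simpl.
    replace (i =? length C) with false by (symmetry; apply Nat.eqb_neq; lia).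
    replace (length C <? i) with false by (symmetry; apply Nat.ltb_ge; lia). auto.
  - apply index_of_None in E. contradiction.
Qed.

Lemma dbt_inst_shadowed z v C env t : In v C ->
  dbt (C ++ env) t = dt_inst (length C) z (dbt (C ++ v :: env) t).
Proof.
  intros Hv. induction t; try (simpl; f_equal; auto; fail).
  destruct (in_dec Nat.eq_dec v0 C).
  - apply dbt_tvar_inst_in; auto.
  - apply dbt_tvar_inst_notin; auto. intros ->; contradiction.
Qed.

Lemma dbf_inst_shadowed z v p : forall C env, In v C ->
  dbf (C ++ env) p = df_inst (length C) z (dbf (C ++ v :: env) p).
Proof.
  induction p; intros C env Hv; simpl; f_equal; auto using dbt_inst_shadowed.
  apply (IHp (v0 :: C)). simpl; auto.
Qed.

Lemma dbt_tsubst_inst z v C env t : ~ In v C -> ~ In z (C ++ env) ->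
  dbt (C ++ env) (tsubst v (tvar z) t) = dt_inst (length C) z (dbt (C ++ v :: env) t).
Proof.
  intros Hv Hz. induction t; try (simpl; f_equal; auto; fail).
  simpl tsubst. destruct (Nat.eqb_spec v0 v).
  - subst. simpl. rewrite !index_of_app.
    assert (E : index_of v C = None) by (apply index_of_None; auto). rewrite E.
    assert (E2 : index_of z (C ++ env) = None) by (apply index_of_None; auto).
    rewrite index_of_app in E2. rewrite E2. simpl. rewrite Nat.eqb_refl. simpl.
    rewrite Nat.add_0_r, Nat.eqb_refl. auto.
  - destruct (in_dec Nat.eq_dec v0 C).
    + apply dbt_tvar_inst_in; auto.
    + apply dbt_tvar_inst_notin; auto.
Qed.

Lemma dbf_fsubst_inst z v p : forall C env, ~ In v C -> ~ In z (bv p) -> ~ In z (C ++ env) ->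
  dbf (C ++ env) (fsubst v (tvar z) p) = df_inst (length C) z (dbf (C ++ v :: env) p).
Proof.
  induction p; intros C env Hv Hzb Hz; simpl in *; try rewrite in_app_iff in Hzb;
    f_equal; auto using dbt_tsubst_inst.
  destruct (Nat.eqb_spec v0 v).
  - subst. simpl. f_equal. apply (dbf_inst_shadowed z v p (v :: C)). simpl; auto.
  - simpl. f_equal. apply (IHp (v0 :: C)); simpl; auto; intuition.
Qed.

Corollary dbf_fsubst_fresh z v env p : ~ In z (bv p) -> ~ In z env ->
  dbf env (fsubst v (tvar z) p) = df_inst 0 z (dbf (v :: env) p).
Proof. intros Hb He. apply (dbf_fsubst_inst z v p [] env); simpl; auto. Qed.

Definition db_related {D} (env1 env2 : list var) (s1 s2 : var -> D) (P Q : list var) :=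
  forall v1 v2, In v1 P -> In v2 Q -> dbt env1 (tvar v1) = dbt env2 (tvar v2) -> s1 v1 = s2 v2.

Lemma exists_fresh (l : list var) : exists z, ~ In z l.
Proof.
  exists (S (list_sum l)). intros H.
  assert (Hle : forall x, In x l -> x <= list_sum l).
  { clear H. induction l; simpl; intros x Hx; [contradiction|].
    destruct Hx as [->|Hx]; [lia|]. apply IHl in Hx. lia. }
  apply Hle in H. lia.
Qed.

Lemma db_related_rename {D} env1 env2 v w z p q (s1 s2 : var -> D) :
  ~ In z (fv p) -> ~ In z (fv q) -> ~ In z env1 -> ~ In z env2 ->
  db_related (v :: env1) (w :: env2) s1 s2 (fv p) (fv q) ->
  db_related env1 env2 (update s1 z (s1 v)) (update s2 z (s2 w))
    (fv (fsubst v (tvar z) p)) (fv (fsubst w (tvar z) q)).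
Proof.
  intros Hzp Hzq Hz1 Hz2 Hrel u1 u2 Hu1 Hu2 Hd.
  apply index_of_None in Hz1, Hz2.
  apply In_fv_fsubst_var in Hu1, Hu2. simpl in Hd.
  destruct Hu1 as [[Hu1 Hn1]|[-> Hv]], Hu2 as [[Hu2 Hn2]|[-> Hw]].
  - rewrite !update_neq by (intros ->; tauto). apply Hrel; auto. simpl.
    apply Nat.eqb_neq in Hn1, Hn2. rewrite Hn1, Hn2.
    destruct (index_of u1 env1), (index_of u2 env2); simpl; congruence.
  - exfalso. rewrite Hz2 in Hd. destruct (index_of u1 env1); congruence.
  - exfalso. rewrite Hz1 in Hd. destruct (index_of u2 env2); [congruence|].
    injection Hd as ->. tauto.
  - rewrite !update_eq. apply Hrel; auto. simpl. now rewrite !Nat.eqb_refl.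
Qed.

Lemma iK_rename (M : structure) p v z s : ~ In z (fv p) -> ~ In z (bv p) ->
  (iK M p s <-> iK M (fsubst v (tvar z) p) (update s z (s v))).
Proof.
  destruct (pre_ok M) as [Ha [_ Hc]]. intros Hzf Hzb.
  rewrite Hc by (apply substitutable_var_notin_bv; auto). rewrite update_eq. apply Ha.
  intros u Hu. destruct (Nat.eq_dec u v); [subst; now rewrite update_eq|].
  rewrite !update_neq; auto. intros ->; tauto.
Qed.

(* Conditions (a)-(c) alone give invariance under alphabetic variants relative to
   arbitrary environments: rename the innermost bound variable on both sides to a fresh
   name with (c), and reach the empty environment, where (b) and (a) apply. *)
Lemma iK_dbf_eq (M : structure) : forall env1 env2 p q s1 s2,
  length env1 = length env2 -> dbf env1 p = dbf env2 q ->
  db_related env1 env2 s1 s2 (fv p) (fv q) ->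
  (iK M p s1 <-> iK M q s2).
Proof.
  destruct (pre_ok M) as [Ha [Hb _]].
  induction env1 as [|v env1 IH]; intros env2 p q s1 s2 Hlen Hdb Hrel.
  - destruct env2; [|discriminate]. rewrite (Hb p q s1 Hdb). apply Ha.
    intros u Hu. apply Hrel; auto.
    assert (Hq : df_free u (dbf [] q)) by (apply df_free_dbf; simpl; tauto).
    rewrite <- Hdb in Hq. apply df_free_dbf in Hq. tauto.
  - destruct env2 as [|w env2]; [discriminate|]. simpl in Hlen.
    destruct (exists_fresh (fv p ++ bv p ++ fv q ++ bv q ++ env1 ++ env2)) as [z Hz].
    rewrite !in_app_iff in Hz.
    rewrite (iK_rename M p v z s1), (iK_rename M q w z s2) by tauto.
    apply (IH env2); [lia| |apply db_related_rename; tauto].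
    rewrite !dbf_fsubst_fresh by tauto. now rewrite Hdb.
Qed.

Lemma teval_dbt_eq (M : prestructure) env1 env2 s1 s2 t u :
  dbt env1 t = dbt env2 u -> db_related env1 env2 s1 s2 (tvars t) (tvars u) ->
  teval M s1 t = teval M s2 u.
Proof.
  revert u; induction t; intros u Hd Hr; destruct u; simpl in *;
    try (destruct (index_of v env1); discriminate);
    try (destruct (index_of v0 env2); discriminate);
    try (destruct (index_of v env2); discriminate);
    try discriminate; auto.
  - apply Hr; simpl; auto.
  - injection Hd as Hd. f_equal. apply IHt; auto.
  - injection Hd as Hd1 Hd2. f_equal; [apply IHt1|apply IHt2]; auto;
      intros ? ? ? ? ?; apply Hr; auto; apply in_app_iff; auto.
  - injection Hd as Hd1 Hd2. f_equal; [apply IHt1|apply IHt2]; auto;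
      intros ? ? ? ? ?; apply Hr; auto; apply in_app_iff; auto.
Qed.

Lemma db_related_cons {D} env1 env2 v1 v2 (s1 s2 : var -> D) d p q :
  db_related env1 env2 s1 s2 (fv (fall v1 p)) (fv (fall v2 q)) ->
  db_related (v1 :: env1) (v2 :: env2) (update s1 v1 d) (update s2 v2 d) (fv p) (fv q).
Proof.
  intros Hr u1 u2 H1 H2 H3. simpl in H3.
  destruct (Nat.eqb_spec u1 v1), (Nat.eqb_spec u2 v2); subst; simpl_update.
  - auto.
  - destruct (index_of u2 env2); discriminate.
  - destruct (index_of u1 env1); discriminate.
  - apply Hr; try (apply in_in_remove; auto).
    simpl. destruct (index_of u1 env1), (index_of u2 env2); simpl in *; congruence.
Qed.

Lemma sat_dbf_eq (M : structure) : forall p q env1 env2 s1 s2,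
  length env1 = length env2 -> dbf env1 p = dbf env2 q ->
  db_related env1 env2 s1 s2 (fv p) (fv q) ->
  (sat M s1 p <-> sat M s2 q).
Proof.
  induction p; intros q env1 env2 s1 s2 Hlen Hd Hr; destruct q; simpl in *; try discriminate.
  - injection Hd as Hd1 Hd2.
    rewrite (teval_dbt_eq M env1 env2 s1 s2 t t1), (teval_dbt_eq M env1 env2 s1 s2 t0 t2);
      auto; try tauto; intros ? ? ? ? ?; apply Hr; auto; apply in_app_iff; auto.
  - injection Hd as Hd. rewrite (IHp q env1 env2 s1 s2); tauto.
  - injection Hd as Hd1 Hd2.
    rewrite (IHp1 q1 env1 env2 s1 s2), (IHp2 q2 env1 env2 s1 s2); auto; try tauto;
      intros ? ? ? ? ?; apply Hr; auto; apply in_app_iff; auto.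
  - injection Hd as Hd.
    assert (IH : forall d, sat M (update s1 v d) p <-> sat M (update s2 v0 d) q).
    { intros d. apply (IHp q (v :: env1) (v0 :: env2)); simpl; auto.
      apply (db_related_cons env1 env2); auto. }
    split; intros H d; apply IH; auto.
  - injection Hd as Hd. apply (iK_dbf_eq M env1 env2); auto.
Qed.

Fixpoint dt_assign (s : var -> nat) (t : dterm) : dterm :=
  match t with
  | DF v => dbt [] (num (s v))
  | DB i => DB i
  | DZ => DZ
  | DS t => DS (dt_assign s t)
  | DP t u => DP (dt_assign s t) (dt_assign s u)
  | DM t u => DM (dt_assign s t) (dt_assign s u)
  end.

Fixpoint df_assign (s : var -> nat) (p : dform) : dform :=
  match p with
  | DEq t u => DEq (dt_assign s t) (dt_assign s u)
  | DNeg p => DNeg (df_assign s p)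
  | DImp p q => DImp (df_assign s p) (df_assign s q)
  | DAll p => DAll (df_assign s p)
  | DK p => DK (df_assign s p)
  end.

Lemma dbt_num env k : dbt env (num k) = dbt [] (num k).
Proof. induction k; simpl; congruence. Qed.

Lemma dbt_tassign s bnd t : dbt bnd (tassign s bnd t) = dt_assign s (dbt bnd t).
Proof.
  induction t; simpl; try congruence.
  destruct (existsb (Nat.eqb v) bnd) eqn:E.
  - apply existsb_eqb_iff in E. simpl. destruct (index_of v bnd) eqn:E2; auto.
    apply index_of_None in E2. contradiction.
  - apply existsb_eqb_false_iff in E.
    assert (E2 : index_of v bnd = None) by (apply index_of_None; auto).
    rewrite E2. simpl. apply dbt_num.
Qed.

Lemma dbf_fassign_aux s bnd p : dbf bnd (fassign_aux s bnd p) = df_assign s (dbf bnd p).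
Proof. revert bnd; induction p; intros bnd; simpl; f_equal; auto using dbt_tassign. Qed.

Lemma fassign_alpha_variant s p q :
  alpha_variant p q -> alpha_variant (fassign s p) (fassign s q).
Proof. unfold alpha_variant, fassign. intros H. now rewrite !dbf_fassign_aux, H. Qed.

Lemma sat_alpha_variant (M : structure) p q s :
  alpha_variant p q -> (sat M s p <-> sat M s q).
Proof.
  intros H. apply (sat_dbf_eq M p q [] [] s s eq_refl H).
  intros v1 v2 _ _ Hv. simpl in Hv. congruence.
Qed.

Lemma M_of_is_structure (Sig : form -> Prop) : is_structure (M_of Sig).
Proof.
  split; [|split]; simpl; unfold fassign.
  - intros p s s' H. rewrite (fassign_aux_ext s s' [] p); [tauto|auto].
  - intros p q s H. apply fassign_alpha_variant with (s := s) in H.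
    split; intros Hc M HM s'; specialize (Hc M HM s');
      [rewrite <- (sat_alpha_variant M _ _ s' H)|rewrite (sat_alpha_variant M _ _ s' H)]; auto.
  - intros p x y s H. rewrite fassign_aux_fsubst_var; auto; tauto.
Qed.

Definition M_struct (Sig : form -> Prop) : structure :=
  {| pre := M_of Sig; pre_ok := M_of_is_structure Sig |}.

Lemma teval_M_of_num (Sig : form -> Prop) (s : var -> nat) k : teval (M_of Sig) s (num k) = k.
Proof. induction k; simpl; auto. Qed.

Lemma sat_M_of_fassign_aux (Sig : form -> Prop) s0 p : forall bnd (s : var -> nat),
  sat (M_of Sig) s (fassign_aux s0 bnd p) <-> sat (M_of Sig) (patch s s0 bnd) p.
Proof.
  induction p; intros bnd s; simpl.
  - assert (G : forall u,
        teval (M_of Sig) s (tassign s0 bnd u) = teval (M_of Sig) (patch s s0 bnd) u).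
    { induction u; simpl; auto.
      unfold patch. destruct (existsb (Nat.eqb v) bnd); simpl; auto. apply teval_M_of_num. }
    rewrite !G. tauto.
  - rewrite IHp. tauto.
  - rewrite IHp1, IHp2. tauto.
  - assert (E : forall d, patch (update s v d) s0 (v :: bnd) = update (patch s s0 bnd) v d).
    { intros d. apply functional_extensionality. intros w. unfold patch, update. simpl.
      destruct (w =? v); simpl; auto. }
    split; intros H d; specialize (H d); [rewrite IHp, E in H|rewrite IHp, E]; auto.
  - unfold fassign. pose proof (fassign_aux_fassign_aux s s0 [] bnd p) as E. simpl in E.
    rewrite E. tauto.
Qed.

Corollary valid_M_of_fassign (Sig : form -> Prop) p s0 s :
  valid p -> sat (M_of Sig) s (fassign s0 p).
Proof.
  intros Hv. apply (sat_M_of_fassign_aux Sig s0 p []).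
  apply (Hv (M_struct Sig)). intros q [].
Qed.

Fixpoint Kfree (p : form) : Prop :=
  match p with
  | feq _ _ => True
  | fneg p => Kfree p
  | fimp p q => Kfree p /\ Kfree q
  | fall _ p => Kfree p
  | fK _ => False
  end.

Lemma Delta0_Kfree p : Delta0 p -> Kfree p.
Proof. induction 1; simpl; auto. Qed.

Lemma Sigma1_Kfree p : Sigma1 p -> Kfree p.
Proof. induction 1; simpl; auto using Delta0_Kfree. Qed.

Lemma Kfree_fsubst v t p : Kfree p -> Kfree (fsubst v t p).
Proof. induction p; simpl; auto; try tauto. destruct (v0 =? v); simpl; auto. Qed.

Lemma teval_ext (M : prestructure) s s' t : (forall v, In v (tvars t) -> s v = s' v) ->
  teval M s t = teval M s' t.
Proof. induction t; simpl; intros H; try setoid_rewrite in_app_iff in H; f_equal; auto. Qed.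

Lemma sat_ext_Kfree (M : prestructure) p : Kfree p -> forall s s',
  (forall v, In v (fv p) -> s v = s' v) -> (sat M s p <-> sat M s' p).
Proof.
  induction p; simpl; intros HK s s' H; try setoid_rewrite in_app_iff in H.
  - rewrite (teval_ext M s s' t), (teval_ext M s s' t0); auto. tauto.
  - rewrite (IHp HK s s'); auto. tauto.
  - rewrite (IHp1 (proj1 HK) s s'), (IHp2 (proj2 HK) s s'); auto. tauto.
  - assert (Hu : forall d w, In w (fv p) -> update s v d w = update s' v d w).
    { intros d w Hw; unfold update; destruct (Nat.eqb_spec w v); auto.
      apply H. apply in_in_remove; auto. }
    split; intros G d; specialize (G d);
      [apply (IHp HK (update s v d))|apply (IHp HK _ (update s' v d))]; auto.
  - contradiction.
Qed.

Lemma sat_fsubst (M : prestructure) v t p :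
  (forall w, In w (bv p) -> w <> v -> ~ In w (tvars t)) ->
  (Kfree p \/ forall q s, iK M (fsubst v t q) s <-> iK M q (update s v (teval M s t))) ->
  forall s, sat M s (fsubst v t p) <-> sat M (update s v (teval M s t)) p.
Proof.
  induction p; simpl; intros Hb HK s; try setoid_rewrite in_app_iff in Hb.
  - assert (G : forall u, teval M s (tsubst v t u) = teval M (update s v (teval M s t)) u).
    { induction u; simpl; try congruence. unfold update. destruct (v0 =? v); auto. }
    rewrite !G. tauto.
  - rewrite IHp; auto. tauto.
  - rewrite IHp1, IHp2; auto; try tauto; destruct HK as [HK|HK]; try tauto.
  - destruct (Nat.eqb_spec v0 v).
    + subst. simpl. split; intros H d; specialize (H d); rewrite update_shadow in *; auto.
    + assert (Ht : forall d, teval M (update s v0 d) t = teval M s t).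
      { intros d. apply teval_ext. intros w Hw. rewrite update_neq; auto.
        intros ->. apply (Hb v0); auto. }
      simpl. split; intros H d; specialize (H d);
        [rewrite IHp, Ht in H|rewrite IHp, Ht]; auto;
        try (rewrite update_comm; auto); destruct HK; auto.
  - destruct HK as [[]|HK]. apply HK.
Qed.

Lemma sat_M_of_Kfree (Sig : form -> Prop) p : Kfree p -> forall s,
  sat (M_of Sig) s p <-> sat stdN s p.
Proof.
  assert (G : forall (s : var -> nat) t, teval (M_of Sig) s t = teval stdN s t).
  { induction t; simpl; congruence. }
  induction p; simpl; intros HK s.
  - rewrite !G. tauto.
  - rewrite IHp; tauto.
  - rewrite IHp1, IHp2; tauto.
  - split; intros H d; apply IHp; auto.
  - contradiction.
Qed.

(** * Models of Peano arithmetic *)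

Fixpoint numval (M : prestructure) (k : nat) : dom M :=
  match k with 0 => i0 M | S k => iS M (numval M k) end.

Lemma teval_num (M : prestructure) s k : teval M s (num k) = numval M k.
Proof. induction k; simpl; congruence. Qed.

Lemma numval_M_of (Sig : form -> Prop) k : numval (M_of Sig) k = k.
Proof. induction k; simpl; auto. Qed.

Lemma sat_bounded_all (M : prestructure) s y z t p :
  y <> z -> ~ In y (tvars t) -> ~ In z (tvars t) ->
  sat M s (fall y (fimp (flt z (tvar y) t) p)) <->
  forall d e, iplus M d (iS M e) = teval M s t -> sat M (update s y d) p.
Proof.
  intros Hyz Hy Hz. simpl.
  assert (Ht : forall d e, teval M (update (update s y d) z e) t = teval M s t).
  { intros d e. apply teval_ext. intros w Hw. rewrite !update_neq; auto; intros ->; auto. }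
  setoid_rewrite Ht. setoid_rewrite update_eq. setoid_rewrite update_neq; auto.
  setoid_rewrite update_eq. split.
  - intros H d e He. apply H. intros Hn. apply (Hn e). exact He.
  - intros H d Hd. apply not_all_ex_not in Hd. destruct Hd as [e He].
    apply (H d e). now apply NNPP.
Qed.

Section PAModel.
Variable M : prestructure.
Hypothesis HPA : forall p, PAax p -> forall s : var -> dom M, sat M s p.

Let sat_PA p (Hp : PAax p) := HPA p Hp (fun _ => i0 M).

Lemma PA_succ_neq0 d : iS M d <> i0 M.
Proof. apply (sat_PA _ pa_s0). Qed.

Lemma PA_succ_inj d e : iS M d = iS M e -> d = e.
Proof. apply (sat_PA _ pa_sinj). Qed.

Lemma PA_add0 d : iplus M d (i0 M) = d.
Proof. apply (sat_PA _ pa_p0). Qed.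

Lemma PA_addS d e : iplus M d (iS M e) = iS M (iplus M d e).
Proof. apply (sat_PA _ pa_pS). Qed.

Lemma PA_mul0 d : imult M d (i0 M) = i0 M.
Proof. apply (sat_PA _ pa_m0). Qed.

Lemma PA_mulS d e : imult M d (iS M e) = iplus M (imult M d e) d.
Proof. apply (sat_PA _ pa_mS). Qed.

Lemma PA_zero_or_succ d : d = i0 M \/ exists e, d = iS M e.
Proof.
  pose proof (sat_PA _ (pa_ind 0
    (fimp (fneg (feq (tvar 0) tzero)) (fex 1 (feq (tvar 0) (tsucc (tvar 1))))))) as H.
  unfold closure in H. simpl in H. unfold update in H. simpl in H.
  assert (G : forall d : dom M, d <> i0 M -> ~ (forall e : dom M, d <> iS M e)).
  { apply H. intros K. apply K.
    - intros Hc. contradiction.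
    - intros e _ _ Hn. apply (Hn e). auto. }
  destruct (classic (d = i0 M)) as [E|E]; [auto|]. right.
  apply NNPP. intros Hn. apply (G d E). intros e He. apply Hn. eauto.
Qed.

Lemma numval_add a b : iplus M (numval M a) (numval M b) = numval M (a + b).
Proof.
  induction b; simpl.
  - rewrite PA_add0. now rewrite Nat.add_0_r.
  - rewrite PA_addS, IHb. now rewrite Nat.add_succ_r.
Qed.

Lemma numval_mul a b : imult M (numval M a) (numval M b) = numval M (a * b).
Proof.
  induction b; simpl.
  - rewrite PA_mul0. now rewrite Nat.mul_0_r.
  - rewrite PA_mulS, IHb, numval_add. now rewrite Nat.mul_succ_r.
Qed.

Lemma numval_inj a b : numval M a = numval M b -> a = b.
Proof.
  revert b; induction a; destruct b; simpl; intros H; auto.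
  - symmetry in H. apply PA_succ_neq0 in H. contradiction.
  - apply PA_succ_neq0 in H. contradiction.
  - apply PA_succ_inj in H. f_equal; auto.
Qed.

Lemma PA_le_numval k : forall y z, iplus M y z = numval M k -> exists j, j <= k /\ y = numval M j.
Proof.
  induction k; intros y z H.
  - destruct (PA_zero_or_succ z) as [->|[w ->]].
    + rewrite PA_add0 in H. exists 0. auto.
    + rewrite PA_addS in H. apply PA_succ_neq0 in H. contradiction.
  - destruct (PA_zero_or_succ z) as [->|[w ->]].
    + rewrite PA_add0 in H. exists (S k). auto.
    + rewrite PA_addS in H. simpl in H. apply PA_succ_inj in H. apply IHk in H.
      destruct H as [j [Hj ->]]. exists j. split; auto.
Qed.

Lemma PA_lt_numval k y z : iplus M y (iS M z) = numval M k -> exists j, j < k /\ y = numval M j.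
Proof.
  intros H. rewrite PA_addS in H. destruct k; simpl in H.
  - apply PA_succ_neq0 in H. contradiction.
  - apply PA_succ_inj in H. apply PA_le_numval in H. destruct H as [j [Hj ->]].
    exists j; split; auto. lia.
Qed.

Lemma teval_numval s t : teval M (fun v => numval M (s v)) t = numval M (teval stdN s t).
Proof.
  induction t; simpl; auto.
  - rewrite IHt; auto.
  - rewrite IHt1, IHt2, numval_add; auto.
  - rewrite IHt1, IHt2, numval_mul; auto.
Qed.

Lemma numval_update (s : var -> nat) y d :
  (fun v => numval M (update s y d v)) = update (fun v => numval M (s v)) y (numval M d).
Proof. apply functional_extensionality; intros v. unfold update. destruct (v =? y); auto. Qed.

Lemma Delta0_absolute p : Delta0 p -> forall s : var -> nat,
  sat stdN s p <-> sat M (fun v => numval M (s v)) p.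
Proof.
  induction 1 as [t u|p Hp IH|p q Hp IHp Hq IHq|y z t p Hyz Hy Hz Hp IH]; intros s.
  - simpl. rewrite !teval_numval. split; intros H; [congruence|]. apply numval_inj; auto.
  - simpl. rewrite IH. tauto.
  - simpl. rewrite IHp, IHq. tauto.
  - rewrite !sat_bounded_all by auto. rewrite teval_numval. split.
    + intros H d e He. apply PA_lt_numval in He. destruct He as [j [Hj ->]].
      rewrite <- numval_update. apply IH. apply (H j (teval stdN s t - j - 1)). simpl. lia.
    + intros H d e He. apply IH. rewrite numval_update. apply (H _ (numval M e)).
      change (iS M (numval M e)) with (numval M (S e)). rewrite numval_add. f_equal.
      simpl in He. lia.
Qed.

Lemma Sigma1_up p : Sigma1 p -> forall s : var -> nat,
  sat stdN s p -> sat M (fun v => numval M (s v)) p.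
Proof.
  induction 1 as [p Hp|y p Hp IH]; intros s.
  - apply Delta0_absolute; auto.
  - simpl. intros H Hn. apply H. intros d Hd. apply (Hn (numval M d)).
    rewrite <- numval_update. apply IH; auto.
Qed.

End PAModel.

Lemma M_of_PA_induction (Sig : form -> Prop) v p s :
  sat (M_of Sig) s (fsubst v tzero p) ->
  (forall d, sat (M_of Sig) (update s v d) p ->
     sat (M_of Sig) (update s v d) (fsubst v (tsucc (tvar v)) p)) ->
  forall d, sat (M_of Sig) (update s v d) p.
Proof.
  set (N := M_of Sig).
  assert (Hsubst : forall t, (forall w, In w (bv p) -> w <> v -> ~ In w (tvars t)) ->
     (forall s bnd, ~ In v bnd -> tassign s bnd t = num (teval N s t)) ->
     forall s, sat N s (fsubst v t p) <-> sat N (update s v (teval N s t)) p).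
  { intros t H1 H2. apply sat_fsubst; auto. right. intros q s'. simpl. unfold fassign.
    rewrite (fassign_aux_fsubst_num s' [] v t (teval N s' t)); [tauto|auto|simpl; auto]. }
  intros H0 HS d. rewrite Hsubst in H0; [|intros; simpl; auto|intros; simpl; auto].
  induction d; [exact H0|].
  specialize (HS d IHd). rewrite Hsubst in HS.
  - simpl in HS. rewrite update_eq, update_shadow in HS. exact HS.
  - simpl. intros w _ Hw [->|[]]; auto.
  - intros s' bnd Hb. simpl. apply existsb_eqb_false_iff in Hb. unfold var in *.
    rewrite Hb. auto.
Qed.

Lemma sat_fand (M : prestructure) s p q : sat M s (fand p q) <-> sat M s p /\ sat M s q.
Proof. simpl. destruct (classic (sat M s p)), (classic (sat M s q)); tauto. Qed.

Lemma sat_fiff (M : prestructure) s p q : sat M s (fiff p q) <-> (sat M s p <-> sat M s q).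
Proof. unfold fiff. rewrite sat_fand. simpl. tauto. Qed.

Lemma closure_sat (M : prestructure) p : (forall s, sat M s p) -> forall s, sat M s (closure p).
Proof. unfold closure. induction (nodup Nat.eq_dec (fv p)); simpl; auto. Qed.

Lemma M_of_PA (Sig : form -> Prop) p : PAax p -> forall s, sat (M_of Sig) s p.
Proof.
  destruct 1 as [| | | | | |v p]; try (intros s; simpl; unfold update; simpl; intros; nia).
  apply closure_sat. intros s H. apply sat_fand in H as [H0 HS].
  intros d. apply M_of_PA_induction; auto.
Qed.

(** * Verifying the axioms of [Sigma(n)] in [M_of] *)

Lemma sat_inW (M : prestructure) a b c x theta g k s :
  Kfree theta -> ~ In x (bv theta) ->
  sat M s (inW a b c theta (tvar x) (num g) (num k)) <->
  sat M (update (update (update s a (s x)) b (numval M g)) c (numval M k)) theta.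
Proof.
  intros HK Hx. unfold inW.
  rewrite sat_fsubst.
  - simpl. rewrite sat_fsubst.
    + rewrite teval_num. rewrite sat_fsubst.
      * rewrite teval_num. tauto.
      * intros w _ _. apply notin_tvars_num.
      * left; auto.
    + intros w _ _. apply notin_tvars_num.
    + left; apply Kfree_fsubst; auto.
  - intros w Hw _. rewrite !bv_fsubst in Hw. simpl. intros [->|[]]. auto.
  - left; apply Kfree_fsubst, Kfree_fsubst; auto.
Qed.

Lemma In_fv_inW a b c x theta g k v :
  (forall u, In u (fv theta) -> u = a \/ u = b \/ u = c) ->
  In v (fv (inW a b c theta (tvar x) (num g) (num k))) -> v = x.
Proof.
  intros Hth H. unfold inW in H.
  apply In_fv_fsubst in H. destruct H as [[H Ha]|H]; [|simpl in H; intuition].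
  apply In_fv_fsubst in H. destruct H as [[H Hb]|H]; [|exfalso; eapply notin_tvars_num; eauto].
  apply In_fv_fsubst in H. destruct H as [[H Hc]|H]; [|exfalso; eapply notin_tvars_num; eauto].
  apply Hth in H. intuition.
Qed.

Lemma In_fv_fold_fall p l v : In v (fv (fold_right fall p l)) -> In v (fv p) /\ ~ In v l.
Proof.
  induction l; simpl; intros H; auto.
  apply in_remove in H. destruct H as [H1 H2]. apply IHl in H1. intuition.
Qed.

Lemma notin_fv_closure p v : ~ In v (fv (closure p)).
Proof. unfold closure. intros H. apply In_fv_fold_fall in H as [H1 H2]. apply H2, nodup_In, H1. Qed.

Lemma Sigma_n_closed x a b c theta n q :
  (forall v, In v (fv theta) -> v = a \/ v = b \/ v = c) ->
  Sigma_n x a b c theta n q -> forall v, ~ In v (fv q).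
Proof.
  intros Hth.
  induction 1 as [p Hv|p q|p|p Hp|p Hfv|p s Hv|p Hp IH]; intros v; try apply notin_fv_closure.
  - destruct Hp; try apply notin_fv_closure; simpl; intros H;
      repeat match goal with H : In _ (remove _ _ _) |- _ => apply in_remove in H; destruct H end;
      simpl in *; repeat rewrite in_app_iff in *; simpl in *; intuition.
  - simpl. rewrite in_remove_iff. intros [H Hx].
    repeat rewrite in_app_iff in H.
    destruct H as [[H|H]|[H|H]]; try (apply Hfv in H; contradiction);
      apply (In_fv_inW a b c x theta _ _ v Hth) in H; contradiction.
  - intros H. apply In_fv_fassign_aux in H. contradiction.
  - simpl. apply IH.
Qed.

Lemma M_of_E1 (Sig : form -> Prop) p : (forall s, Sig (fassign s p)) ->
  forall s, sat (M_of Sig) s (closure (fK p)).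
Proof. intros H. apply closure_sat. intros s M HM s'. apply HM, H. Qed.

Lemma M_of_E2 (Sig : form -> Prop) p q s :
  sat (M_of Sig) s (closure (fimp (fK (fimp p q)) (fimp (fK p) (fK q)))).
Proof.
  apply closure_sat. clear s. intros s. simpl. intros Hpq Hp M HM s'.
  apply (Hpq M HM s'), (Hp M HM s').
Qed.

Lemma M_of_K_sentence (Sig : form -> Prop) q s :
  (forall v, ~ In v (fv q)) -> Sig q -> sat (M_of Sig) s (fK q).
Proof.
  intros Hq HSig. simpl. unfold fassign.
  rewrite fassign_aux_id by (intros v Hv; exfalso; eapply Hq; eauto).
  intros M HM s'. apply HM, HSig.
Qed.

Section Proposition19.
Variables (x a b c : var) (theta : form) (n : nat).
Hypothesis HW : W_formula x a b c theta.
Hypothesis Hn : forall k, W n k <->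
  exists m p, k = pair m (gform p) /\
    (forall v, In v (fv p) -> v = x) /\
    conseq (Sigma_n x a b c theta n) (fsubst x (num m) p).

Let Sig := Sigma_n x a b c theta n.
Let inW_x (g : nat) := inW a b c theta (tvar x) (num g) (num n).

Lemma sat_M_of_inW s g : sat (M_of Sig) s (inW_x g) <-> W n (pair (s x) g).
Proof.
  destruct HW as [HS1 [Hab [Hac [Hbc [_ [Hxb Hspec]]]]]].
  unfold inW_x. rewrite sat_inW by (auto; apply Sigma1_Kfree; auto).
  rewrite sat_M_of_Kfree by (apply Sigma1_Kfree; auto).
  rewrite Hspec. simpl_update. now rewrite !numval_M_of.
Qed.

(* [theta] is Sigma_1, and true Sigma_1 sentences hold in every model of PA. *)
Lemma sat_inW_of_W (M : prestructure) s m g :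
  (forall p, PAax p -> forall s, sat M s p) ->
  s x = numval M m -> W n (pair m g) -> sat M s (inW_x g).
Proof.
  destruct HW as [HS1 [Hab [Hac [Hbc [Hth [Hxb Hspec]]]]]].
  intros HPA Hx HWn. unfold inW_x. apply sat_inW; [apply Sigma1_Kfree; auto|auto|].
  set (sN := update (update (update (fun _ : var => 0) a m) b g) c n).
  apply (sat_ext_Kfree M theta (Sigma1_Kfree _ HS1) (fun v => numval M (sN v))).
  - intros v Hv. unfold sN. apply Hth in Hv.
    destruct Hv as [ -> | [ -> | -> ] ]; simpl_update; auto.
  - apply (Sigma1_up M HPA); auto. apply Hspec. unfold sN. now simpl_update.
Qed.

Lemma conseq_fK_sentence q : (forall v, ~ In v (fv q)) -> conseq Sig q -> conseq Sig (fK q).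
Proof.
  intros Hq Hc M HM s.
  assert (Hax : sat M s (fall x (fiff (fK q) (inW_x (gform q))))).
  { apply HM, sg_3. intros v Hv. exfalso; eapply Hq; eauto. }
  assert (HK : sat M (update s x (i0 M)) (fK q)).
  { pose proof (Hax (i0 M)) as Hax0. apply sat_fiff in Hax0.
    apply Hax0, (sat_inW_of_W M _ 0).
    - intros p Hp. apply HM, sg_PA, Hp.
    - now rewrite update_eq.
    - apply Hn. exists 0, q. repeat split; auto.
      + intros v Hv. exfalso; eapply Hq; eauto.
      + rewrite fsubst_notin; auto. }
  destruct (pre_ok M) as [Ha _]. apply (Ha q _ s) in HK; auto.
  intros v Hv. exfalso; eapply Hq; eauto.
Qed.

Lemma M_of_E4 p s : sat (M_of Sig) s (closure (fimp (fK p) (fK (fK p)))).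
Proof.
  apply closure_sat. clear s. intros s H.
  apply (conseq_fK_sentence (fassign s p)); auto.
  intros v Hv. apply In_fv_fassign_aux in Hv. contradiction.
Qed.

Lemma M_of_W_axiom p s : (forall v, In v (fv p) -> v = x) ->
  sat (M_of Sig) s (fall x (fiff (fK p) (inW_x (gform p)))).
Proof.
  intros Hfv d. apply sat_fiff. rewrite sat_M_of_inW, update_eq, Hn. simpl.
  rewrite (fassign_single_var _ x) by auto. rewrite update_eq. split.
  - intros H. exists d, p. auto.
  - intros [m [p' [He [_ Hc]]]]. apply pair_inj in He as [-> He].
    apply gform_inj in He. now subst.
Qed.

End Proposition19.

Theorem proposition19 (x a b c : var) (theta : form) (n : nat) :
  W_formula x a b c theta ->
  (forall k, W n k <->
     exists m p, k = pair m (gform p) /\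
       (forall v, In v (fv p) -> v = x) /\
       conseq (Sigma_n x a b c theta n) (fsubst x (num m) p)) ->
  models (M_of (Sigma_n x a b c theta n)) (Sigma_n x a b c theta n).
Proof.
  intros HW Hn q Hq.
  pose proof HW as (_ & _ & _ & _ & Hth & _).
  destruct Hq as [p Hv|p q|p|p Hp|p Hfv|p s0 Hv|p Hp]; intros s.
  - apply M_of_E1. intros s'. apply sg_AV, Hv.
  - apply M_of_E2.
  - apply M_of_E4; auto.
  - apply M_of_PA, Hp.
  - apply M_of_W_axiom; auto.
  - apply valid_M_of_fassign, Hv.
  - apply M_of_K_sentence, Hp. apply (Sigma_n_closed x a b c theta n p Hth Hp).
Qed.
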